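(* For all $x,y,z\in\mathbb{C}^{n\times r}$, $$\|x-y\|_2\|x+y\|_2\leq\|x-z\|_2\|x+z\|_2+\|z-y\|_2\|z+y\|_2.$$
   Context: $\|\cdot\|_2$ denotes the Frobenius norm. *)

From mathcomp Require Import all_boot all_order all_algebra.
From mathcomp Require Import complex.
From mathcomp Require Import reals.
Set Implicit Arguments. Unset Strict Implicit. Unset Printing Implicit Defensive.
Import Order.TTheory GRing.Theory Num.Theory.
Local Open Scope ring_scope.

Definition frob_norm (R : realType) (n r : nat) (A : 'M[R[i]]_(n, r)) : R :=
  Num.sqrt (\sum_(i < n) \sum_(j < r) (ComplexField.Normc.normc (A i j)) ^+ 2).

(* Splitting the entries into real and imaginary parts turns the Frobenius
   norm of a complex matrix into the Euclidean norm of a real one, and the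
   inequality becomes Ptolemy's inequality
     |a - c| |b - d| <= |a - b| |c - d| + |a - d| |b - c|
   for the points a = x - y + z, b = x, c = z, d = -y.
   Ptolemy's inequality follows from the triangle inequality by inversion:
   the map u |-> u / |u|^2 satisfies |u/|u|^2 - v/|v|^2| = |u - v| / (|u| |v|)
   (mxnorm_inversion is this identity with the denominators cleared), so the
   triangle inequality for the images of q, r, s gives the inequality with
   centre 0. *)

From mathcomp Require Import all_boot all_order all_algebra.
From mathcomp Require Import complex.
From mathcomp Require Import reals.
From mathcomp Require Import ring lra.
Import Order.TTheory GRing.Theory Num.Theory.
Local Open Scope ring_scope.
Set Implicit Arguments. Unset Strict Implicit.

Section FrobeniusInnerProduct.
Variables (R : rcfType) (m p : nat).
Implicit Types (u v w : 'M[R]_(m, p)) (a : R).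

Definition mxdot u v : R := \sum_i \sum_j u i j * v i j.
Definition mxnorm u : R := Num.sqrt (mxdot u u).

Lemma mxdotC u v : mxdot u v = mxdot v u.
Proof. by apply: eq_bigr => i _; apply: eq_bigr => j _; rewrite mulrC. Qed.

Lemma mxdotDl u v w : mxdot (u + v) w = mxdot u w + mxdot v w.
Proof.
rewrite -big_split; apply: eq_bigr => i _; rewrite -big_split.
by apply: eq_bigr => j _; rewrite mxE mulrDl.
Qed.

Lemma mxdotNl u v : mxdot (- u) v = - mxdot u v.
Proof.
rewrite /mxdot -sumrN; apply: eq_bigr => i _; rewrite -sumrN.
by apply: eq_bigr => j _; rewrite mxE mulNr.
Qed.

Lemma mxdotZl a u v : mxdot (a *: u) v = a * mxdot u v.
Proof.
rewrite /mxdot mulr_sumr; apply: eq_bigr => i _; rewrite mulr_sumr.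
by apply: eq_bigr => j _; rewrite mxE mulrA.
Qed.

Lemma mxdotDr u v w : mxdot u (v + w) = mxdot u v + mxdot u w.
Proof. by rewrite !(mxdotC u) mxdotDl. Qed.

Lemma mxdotNr u v : mxdot u (- v) = - mxdot u v.
Proof. by rewrite !(mxdotC u) mxdotNl. Qed.

Lemma mxdotZr a u v : mxdot u (a *: v) = a * mxdot u v.
Proof. by rewrite !(mxdotC u) mxdotZl. Qed.

Definition mxdotE := (mxdotDl, mxdotDr, mxdotNl, mxdotNr, mxdotZl, mxdotZr).

Lemma mxdot_ge0 u : 0 <= mxdot u u.
Proof. by do 2!apply: sumr_ge0 => ? _; rewrite -expr2 sqr_ge0. Qed.

Lemma mxdot_eq0 u : (mxdot u u == 0) = (u == 0).
Proof.
apply/eqP/eqP => [uu0|->]; last first.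
  by rewrite /mxdot big1 // => i _; rewrite big1 // => j _; rewrite mxE mul0r.
apply/matrixP => i j; rewrite mxE; apply/eqP; rewrite -sqrf_eq0 expr2; apply/eqP.
have row_sum_ge0 k : 0 <= \sum_j u k j * u k j.
  by apply: sumr_ge0 => l _; rewrite -expr2 sqr_ge0.
have row_eq0 : \sum_j u i j * u i j = 0 by apply: (psumr_eq0P _ uu0).
by apply: (psumr_eq0P _ row_eq0) => // l _; rewrite -expr2 sqr_ge0.
Qed.

Lemma mxnorm_ge0 u : 0 <= mxnorm u.
Proof. exact: sqrtr_ge0. Qed.

Lemma sqr_mxnorm u : mxnorm u ^+ 2 = mxdot u u.
Proof. by rewrite sqr_sqrtr ?mxdot_ge0. Qed.

Lemma mxnorm_eq0 u : (mxnorm u == 0) = (u == 0).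
Proof. by rewrite sqrtr_eq0 -mxdot_eq0 eq_le mxdot_ge0 andbT. Qed.

Lemma mxnorm0 : mxnorm 0 = 0.
Proof. by apply/eqP; rewrite mxnorm_eq0. Qed.

Lemma mxnormZ a u : mxnorm (a *: u) = `|a| * mxnorm u.
Proof. by rewrite /mxnorm !mxdotE mulrA -expr2 sqrtrM ?sqr_ge0 // sqrtr_sqr. Qed.

Lemma mxnormN u : mxnorm (- u) = mxnorm u.
Proof. by rewrite -scaleN1r mxnormZ normrN1 mul1r. Qed.

Lemma mxnormBC u v : mxnorm (u - v) = mxnorm (v - u).
Proof. by rewrite -opprB mxnormN. Qed.

Lemma mxdot_CauchySchwarz u v : mxdot u v <= mxnorm u * mxnorm v.
Proof.
have [->|v_neq0] := eqVneq v 0.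
  by rewrite -(scale0r 0) mxdotZr mul0r mulr_ge0 ?mxnorm_ge0.
have vv_gt0 : 0 < mxdot v v by rewrite lt_def mxdot_eq0 v_neq0 mxdot_ge0.
have sqr_mxdot_le : mxdot u v ^+ 2 <= mxdot u u * mxdot v v.
  set w := mxdot v v *: u - mxdot u v *: v.
  have expand_w : mxdot w w = mxdot v v * (mxdot u u * mxdot v v - mxdot u v ^+ 2).
    by rewrite !mxdotE (mxdotC v u); ring.
  have := mxdot_ge0 w; rewrite expand_w.
  by rewrite pmulr_rge0 // subr_ge0.
rewrite (le_trans (ler_norm _)) // -sqrtr_sqr /mxnorm -sqrtrM ?mxdot_ge0 //.
by rewrite ler_sqrt // mulr_ge0 ?mxdot_ge0.
Qed.

Lemma ler_mxnormD u v : mxnorm (u + v) <= mxnorm u + mxnorm v.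
Proof.
rewrite -ler_sqr ?nnegrE ?addr_ge0 ?mxnorm_ge0 //.
rewrite sqrrD !sqr_mxnorm !mxdotE (mxdotC v u).
have := mxdot_CauchySchwarz u v; lra.
Qed.

Lemma mxnorm_inversion u v :
  mxnorm (mxdot v v *: u - mxdot u u *: v) = mxnorm u * mxnorm v * mxnorm (u - v).
Proof.
rewrite /mxnorm -!sqrtrM ?mulr_ge0 ?mxdot_ge0 //; congr Num.sqrt.
by rewrite !mxdotE (mxdotC v u); ring.
Qed.

Lemma mxnorm_ptolemy0 q r s :
  mxnorm r * mxnorm (q - s) <= mxnorm q * mxnorm (r - s) + mxnorm (r - q) * mxnorm s.
Proof.
have [->|q_neq0] := eqVneq q 0.
  by rewrite sub0r subr0 mxnormN mxnorm0 mul0r add0r.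
have [->|r_neq0] := eqVneq r 0.
  by rewrite mxnorm0 mul0r addr_ge0 // mulr_ge0 ?mxnorm_ge0.
have [->|s_neq0] := eqVneq s 0.
  by rewrite !subr0 mxnorm0 mulr0 addr0 mulrC.
have norm_gt0 u : u != 0 -> 0 < mxnorm u.
  by move=> u_neq0; rewrite lt_def mxnorm_eq0 u_neq0 mxnorm_ge0.
have nqrs_gt0 : 0 < mxnorm q * mxnorm r * mxnorm s.
  by rewrite !mulr_gt0 ?norm_gt0.
have inversion_split :
    mxdot r r *: (mxdot s s *: q - mxdot q q *: s) =
    mxdot s s *: (mxdot r r *: q - mxdot q q *: r) +
    mxdot q q *: (mxdot s s *: r - mxdot r r *: s).
  by apply/matrixP => i j; rewrite !mxE; ring.
have := ler_mxnormD (mxdot s s *: (mxdot r r *: q - mxdot q q *: r))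
                   (mxdot q q *: (mxdot s s *: r - mxdot r r *: s)).
rewrite -inversion_split !mxnormZ !mxnorm_inversion !ger0_norm ?mxdot_ge0 //.
rewrite -!sqr_mxnorm (mxnormBC q r) => key.
rewrite -(ler_pM2l nqrs_gt0); lra.
Qed.

Lemma mxnorm_ptolemy (a b c d : 'M[R]_(m, p)) :
  mxnorm (a - c) * mxnorm (b - d) <=
  mxnorm (a - b) * mxnorm (c - d) + mxnorm (a - d) * mxnorm (b - c).
Proof.
have subB u v : (u - c) - (v - c) = u - v by rewrite opprB addrA subrK.
have := mxnorm_ptolemy0 (b - c) (a - c) (d - c).
rewrite !subB (mxnormBC d c); lra.
Qed.

End FrobeniusInnerProduct.

Section Realification.
Variables (R : realType) (n r : nat).
Implicit Types (A B : 'M[R[i]]_(n, r)).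

Definition realify A : 'M[R]_(n, r + r) :=
  row_mx (map_mx (@complex.Re R) A) (map_mx (@complex.Im R) A).

Lemma realifyB A B : realify (A - B) = realify A - realify B.
Proof. by rewrite /realify !map_mxB opp_row_mx add_row_mx. Qed.

Lemma frob_norm_realify A : frob_norm A = mxnorm (realify A).
Proof.
rewrite /frob_norm /mxnorm /mxdot; congr Num.sqrt; apply: eq_bigr => i _.
rewrite big_split_ord /= -big_split /=; apply: eq_bigr => j _.
rewrite /realify row_mxEl row_mxEr !mxE -!expr2.
by case: (A i j) => a b /=; rewrite sqr_sqrtr // addr_ge0 ?sqr_ge0.
Qed.

Lemma frob_norm_ptolemy (a b c d : 'M[R[i]]_(n, r)) :
  frob_norm (a - c) * frob_norm (b - d) <=
  frob_norm (a - b) * frob_norm (c - d) + frob_norm (a - d) * frob_norm (b - c).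
Proof. rewrite !frob_norm_realify !realifyB; exact: mxnorm_ptolemy. Qed.

End Realification.

Theorem lemmaA1 (R : realType) (n r : nat) (x y z : 'M[R[i]]_(n, r)) :
  frob_norm (x - y) * frob_norm (x + y)
  <= frob_norm (x - z) * frob_norm (x + z) + frob_norm (z - y) * frob_norm (z + y).
Proof.
have := frob_norm_ptolemy (x - y + z) x z (- y).
rewrite addrK !opprK.
have -> : x - y + z - x = z - y by rewrite addrC addrA addKr addrC.
have -> : x - y + z + y = x + z by rewrite addrAC subrK.
lra.
Qed.
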